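(* Let $N$ be a finite set and $\mathcal{F} \subseteq 2^N$ a set family. If $\mathcal{F}$ satisfies (B$^\natural$-EXC$_{\rm m}$), then $\mathcal{F}$ satisfies (B$^\natural$-EXC).
   Context: Notation: $X - i = X \setminus \{i\}$, $Y + i = Y \cup \{i\}$, $X - i + j = (X\setminus\{i\})\cup\{j\}$, $Y + i - j = (Y \cup\{i\})\setminus\{j\}$. (B$^\natural$-EXC): for any $X, Y \in \mathcal{F}$ and $i \in X\setminus Y$, either (i) $X - i \in \mathcal{F}$ and $Y + i \in \mathcal{F}$, or (ii) there exists $j \in Y\setminus X$ with $X - i + j \in \mathcal{F}$ and $Y + i - j \in \mathcal{F}$. (B$^\natural$-EXC$_{\rm m}$): for any $X, Y \in \mathcal{F}$ and $I \subseteq X\setminus Y$ there exists $J \subseteq Y\setminus X$ with $(X\setminus I)\cup J \in \mathcal{F}$ and $(Y\setminus J)\cup I \in \mathcal{F}$. *)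

From mathcomp Require Import all_boot.
Set Implicit Arguments. Unset Strict Implicit. Unset Printing Implicit Defensive.

Definition bnat_exc (N : finType) (F : {set {set N}}) : Prop :=
  forall X Y, X \in F -> Y \in F -> forall i, i \in X :\: Y ->
    (X :\ i \in F /\ i |: Y \in F) \/
    (exists2 j, j \in Y :\: X & (j |: (X :\ i) \in F /\ (i |: Y) :\ j \in F)).

Definition bnat_exc_m (N : finType) (F : {set {set N}}) : Prop :=
  forall X Y, X \in F -> Y \in F -> forall I : {set N}, I \subset X :\: Y ->
    exists2 J : {set N}, J \subset Y :\: X &
      ((X :\: I) :|: J \in F /\ (Y :\: J) :|: I \in F).

From mathcomp Require Import all_boot.

Set Implicit Arguments. Unset Strict Implicit. Unset Printing Implicit Defensive.

(* Call J ⊆ Y \ X a witness if (X - i) ∪ J and (Y \ J) + i lie in F: (B♮-EXC_m)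
   with I = {i} provides one, and the empty witness is case (i) of (B♮-EXC).
   For a witness J ∋ b put A = J - b.  Exchanging b between (X - i) ∪ J and X,
   whose difference in the other direction is only {i}, leaves two options, and
   so does exchanging b between Y and (Y \ J) + i.  Of the four combinations one
   makes A a witness and one gives case (ii) with j = b.  The other two provide
   a pair, (X ∪ A, Y - b) or (X + b, Y \ A), whose symmetric difference is that
   of (X, Y) minus J; induction on |X Δ Y| for this pair and i, followed by two
   more multiple exchanges, again gives case (ii) or makes A a witness.
   Induction on |J| concludes. *)

(* Proves set identities and inclusions elementwise: split on which named
   point the element is, then on its remaining memberships. *)
Ltac set_decide :=
  let x := fresh "x" in
  first [apply/setP => x | apply/subsetP => x; apply/implyP]; rewrite !inE;
  repeat match goal with
  | H : is_true (?p != ?q) |- context [?p == ?q] => rewrite (negbTE H)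
  | H : is_true (?p != ?q) |- context [?q == ?p] => rewrite eq_sym (negbTE H)
  | H : is_true (?p \in ?S) |- context [?p \in ?S] => rewrite H
  | H : is_true (?p \notin ?S) |- context [?p \in ?S] => rewrite (negbTE H)
  | |- context [?p == ?p] => rewrite eqxx
  | |- context [x == ?p] => case: (eqVneq x p) => [->|?]
  | H : is_true (?S \subset ?T) |- context [x \in ?S] =>
      move: (subsetP H x) => /implyP; rewrite ?inE; clear H
  end;
  repeat match goal with
  | |- context [?p \in ?S] => case: (p \in S)
  | |- context [?p == ?q] => case: (p == q)
  end;
  by [].

Ltac family_eq h :=
  first [exact h |
  match type of h with is_true (?A \in ?G) =>
  match goal with |- is_true (?B \in G) =>
    rewrite -(_ : A = B) //; set_decide
  end end].

Definition sdist (N : finType) (X Y : {set N}) := #|X :\: Y| + #|Y :\: X|.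

Lemma sdist_shrink (N : finType) (X Y P Q J : {set N}) :
  P :\: Q = X :\: Y -> Q :\: P = (Y :\: X) :\: J -> J \subset Y :\: X ->
  J != set0 -> sdist P Q < sdist X Y.
Proof.
rewrite /sdist => -> -> sJ nJ; rewrite ltn_add2l cardsD (setIidPr sJ) ltn_subrL.
by rewrite card_gt0 nJ (leq_trans _ (subset_leq_card sJ)) // card_gt0.
Qed.

Section Exchange.
Variables (N : finType) (F : {set {set N}}).

Definition exchange (X Y : {set N}) (i : N) : Prop :=
  (X :\ i \in F /\ i |: Y \in F) \/
  (exists2 j, j \in Y :\: X & (j |: (X :\ i) \in F /\ (i |: Y) :\ j \in F)).

Hypothesis exc_m : bnat_exc_m F.

Lemma exc_m_near (X Y I : {set N}) e :
  X \in F -> Y \in F -> I \subset X :\: Y -> Y :\: X \subset [set e] ->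
  (X :\: I \in F /\ Y :|: I \in F) \/ (e |: (X :\: I) \in F /\ (Y :\ e) :|: I \in F).
Proof.
move=> hX hY sI se; have [J sJ [hXJ hYJ]] := exc_m hX hY sI.
have := subset_trans sJ se; rewrite subset1 => /orP [/eqP eJ | /eqP J0].
  by rewrite eJ in hXJ hYJ; right; rewrite setUC in hXJ.
by rewrite J0 in hXJ hYJ; left; rewrite setU0 in hXJ; rewrite setD0 in hYJ.
Qed.

Section Step.
Variables (X Y : {set N}) (i : N).
Hypotheses (hX : X \in F) (hY : Y \in F) (hiX : i \in X) (hiY : i \notin Y).
Hypothesis IH : forall P Q, sdist P Q < sdist X Y -> P \in F -> Q \in F ->
  forall j, j \in P :\: Q -> exchange P Q j.

Section Shrink.
Variables (J : {set N}) (b : N).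
Hypotheses (sJ : J \subset Y :\: X) (hbJ : b \in J).

Let hbYX : b \in Y :\: X. Proof. exact: subsetP sJ b hbJ. Qed.
Let hbY : b \in Y. Proof. by case/setDP: hbYX. Qed.
Let hbX : b \notin X. Proof. by case/setDP: hbYX. Qed.
Let hib : i != b. Proof. by apply: contraNneq hiY => ->. Qed.
Let hiJ : i \notin J. Proof. by apply/negP => /(subsetP sJ); rewrite inE hiX. Qed.
Let nJ : J != set0. Proof. by apply/set0Pn; exists b. Qed.

Lemma swap_x_side : (X :\ i) :|: J \in F ->
  ((X :\ i) :|: (J :\ b) \in F /\ b |: X \in F) \/
  (X :|: (J :\ b) \in F /\ b |: (X :\ i) \in F).
Proof.
move=> hXJ.
have sb : [set b] \subset ((X :\ i) :|: J) :\: X by set_decide.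
have si : X :\: ((X :\ i) :|: J) \subset [set i] by set_decide.
by case: (exc_m_near hXJ hX sb si) => -[h1 h2]; [left | right];
  (split; [family_eq h1 | family_eq h2]).
Qed.

Lemma swap_y_side : i |: (Y :\: J) \in F ->
  (Y :\ b \in F /\ i |: (Y :\: (J :\ b)) \in F) \/
  ((i |: Y) :\ b \in F /\ Y :\: (J :\ b) \in F).
Proof.
move=> hYJ.
have sb : [set b] \subset Y :\: (i |: (Y :\: J)) by set_decide.
have si : (i |: (Y :\: J)) :\: Y \subset [set i] by set_decide.
by case: (exc_m_near hY hYJ sb si) => -[h1 h2]; [left | right];
  (split; [family_eq h1 | family_eq h2]).
Qed.

Lemma recover_x_half : X :|: (J :\ b) \in F -> b |: (X :\ i) \in F -> Y :\ b \in F ->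
  exchange X Y i \/ (X :\ i) :|: (J :\ b) \in F.
Proof.
move=> hXA hXb hYb.
have lt : sdist (X :|: (J :\ b)) (Y :\ b) < sdist X Y.
  by apply: (sdist_shrink (J := J)) => //; set_decide.
have hi : i \in (X :|: (J :\ b)) :\: (Y :\ b) by rewrite !inE hiX (negbTE hiY) andbF.
have [[_ hYi] | [k hk [hXk hYk]]] := IH lt hXA hYb hi.
  by left; right; exists b => //; split => //; family_eq hYi.
have hkY : k \in Y by move: hk; rewrite !inE => /andP [_ /andP [_ ->]].
have hki : k != i by apply: contraTneq hkY => ->.
have [hkb hkX hkJ] : [/\ k != b, k \notin X & k \notin J].
  by move: hk; rewrite !inE; case: (k == b); case: (k \in X); case: (k \in J).
have sb : [set b] \subset Y :\: ((i |: (Y :\ b)) :\ k) by set_decide.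
have si : ((i |: (Y :\ b)) :\ k) :\: Y \subset [set i] by set_decide.
have [[_ hYik] | [hYib _]] := exc_m_near hY hYk sb si; last first.
  by left; right; exists b => //; split => //; family_eq hYib.
have sA : J :\ b \subset (k |: ((X :|: (J :\ b)) :\ i)) :\: (b |: (X :\ i)).
  by set_decide.
have sb' : (b |: (X :\ i)) :\: (k |: ((X :|: (J :\ b)) :\ i)) \subset [set b].
  by set_decide.
have [[hXik _] | [_ hXA']] := exc_m_near hXk hXb sA sb'.
  have hkYX : k \in Y :\: X by rewrite inE hkX hkY.
  by left; right; exists k => //; split; [family_eq hXik | family_eq hYik].
by right; family_eq hXA'.
Qed.

Lemma recover_y_half : b |: X \in F -> (i |: Y) :\ b \in F -> Y :\: (J :\ b) \in F ->
  exchange X Y i \/ i |: (Y :\: (J :\ b)) \in F.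
Proof.
move=> hXb hYb hYA.
have lt : sdist (b |: X) (Y :\: (J :\ b)) < sdist X Y.
  by apply: (sdist_shrink (J := J)) => //; set_decide.
have hi : i \in (b |: X) :\: (Y :\: (J :\ b)) by rewrite !inE hiX (negbTE hiY) !andbF orbT.
have [[hXi _] | [k hk [hXk hYk]]] := IH lt hXb hYA hi.
  by left; right; exists b => //; split => //; family_eq hXi.
have hkY : k \in Y by move: hk; rewrite !inE => /andP [_ /andP [_ ->]].
have hki : k != i by apply: contraTneq hkY => ->.
have [hkb hkX hkJ] : [/\ k != b, k \notin X & k \notin J].
  by move: hk; rewrite !inE; case: (k == b); case: (k \in X); case: (k \in J).
have sb : [set b] \subset (k |: ((b |: X) :\ i)) :\: X by set_decide.
have si : X :\: (k |: ((b |: X) :\ i)) \subset [set i] by set_decide.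
have [[hXik _] | [_ hXib]] := exc_m_near hXk hX sb si; last first.
  by left; right; exists b => //; split => //; family_eq hXib.
have sA : J :\ b \subset ((i |: Y) :\ b) :\: ((i |: (Y :\: (J :\ b))) :\ k).
  by set_decide.
have sb' : ((i |: (Y :\: (J :\ b))) :\ k) :\: ((i |: Y) :\ b) \subset [set b].
  by set_decide.
have [[_ hYik] | [hYA' _]] := exc_m_near hYb hYk sA sb'.
  have hkYX : k \in Y :\: X by rewrite inE hkX hkY.
  by left; right; exists k => //; split; [family_eq hXik | family_eq hYik].
by right; family_eq hYA'.
Qed.

Lemma witness_shrink : (X :\ i) :|: J \in F -> i |: (Y :\: J) \in F ->
  exchange X Y i \/ ((X :\ i) :|: (J :\ b) \in F /\ i |: (Y :\: (J :\ b)) \in F).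
Proof.
move=> hXJ hYJ.
have [[hXA hXb] | [hXA hXb]] := swap_x_side hXJ;
  have [[hYb hYA] | [hYb hYA]] := swap_y_side hYJ.
- by right.
- by have [|->] := recover_y_half hXb hYb hYA; [left | right].
- by have [|->] := recover_x_half hXA hXb hYb; [left | right].
- by left; right; exists b.
Qed.

End Shrink.

Lemma exchange_of_witness (J : {set N}) : J \subset Y :\: X ->
  (X :\ i) :|: J \in F -> i |: (Y :\: J) \in F -> exchange X Y i.
Proof.
have [n] := ubnP #|J|; elim: n J => // n IHn J ltJ sJ hXJ hYJ.
have [J0 | [b hbJ]] := set_0Vmem J.
  by move: hXJ hYJ; rewrite J0 setU0 setD0 => *; left.
have [// | [hXA hYA]] := witness_shrink sJ hbJ hXJ hYJ.
apply: (IHn (J :\ b)) => //; first by rewrite (cardsD1 b J) hbJ in ltJ.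
exact: subset_trans (subD1set J b) sJ.
Qed.

Lemma exchange_step : exchange X Y i.
Proof.
have si : [set i] \subset X :\: Y by rewrite sub1set inE hiX hiY.
have [J sJ [hXJ hYJ]] := exc_m hX hY si.
by apply: (exchange_of_witness sJ hXJ); rewrite setUC.
Qed.

End Step.
End Exchange.

Theorem proposition3 (N : finType) (F : {set {set N}}) :
  bnat_exc_m F -> bnat_exc F.
Proof.
move=> exc_m X Y; have [n] := ubnP (sdist X Y).
elim: n X Y => // n IHn X Y lt hX hY i /setDP [hiX hiY].
apply: (exchange_step exc_m hX hY hiX hiY) => P Q ltPQ.
exact/IHn/(leq_trans ltPQ lt).
Qed.
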